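(* Let $k\ge4$ be even and let $G$ be a $k$-uniform hypergraph. Then the number of minimal canonical H-eigenvectors of the Laplacian tensor $\mathcal D-\mathcal A$ corresponding to the eigenvalue $0$, counted with $\mathbf x$ and $-\mathbf x$ identified, equals (number of even-bipartite connected components of $G$) $+$ (number of connected components of $G$) $-$ (number of singletons of $G$).
   Context: A $k$-uniform hypergraph $G=(V,E)$ has vertex set $V=[n]$ ($n\ge k$) and nonempty edge set $E$ of $k$-element subsets; $E_i=\{e\in E:i\in e\}$, $d_i=|E_i|$. A singleton is a vertex of degree $0$. Connected components are maximal sets of vertices pairwise joined by chains of edges with consecutive edges intersecting; each singleton is also a connected component. $\mathcal A$: $a_{i_1\dots i_k}=\frac1{(k-1)!}$ if $\{i_1,\dots,i_k\}\in E$, else $0$; $\mathcal D$ diagonal with $d_{i\dots i}=d_i$; so $((\mathcal D-\mathcal A)\mathbf x^{k-1})_i=d_ix_i^{k-1}-\sum_{e\in E_i}\prod_{j\in e\setminus\{i\}}x_j$. A nonzero $\mathbf x\in\mathbb C^n$ is an eigenvector of $\mathcal T$ for $\lambda$ if $(\mathcal T\mathbf x^{k-1})_i=\lambda x_i^{k-1}$ for all $i$; an H-eigenvector is a real eigenvector; it is canonical if $\max_i|x_i|=1$; an eigenvector of eigenvalue $0$ is minimal if no eigenvector of eigenvalue $0$ has support strictly contained in its support. Counting of even-bipartite connected components: each singleton component contributes $1$; each connected component $C$ with $|C|\ge2$ contributes the number of unordered partitions $\{S,T\}$ of $C$ with $S,T\ne\emptyset$ such that $|e\cap S|$ is even for every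 edge $e\subseteq C$. The number of even-bipartite connected components is the sum of these contributions. *)

From HB Require Import structures.
From mathcomp Require Import all_boot all_order all_algebra.
Set Implicit Arguments. Unset Strict Implicit. Unset Printing Implicit Defensive.
Import Order.TTheory GRing.Theory Num.Theory.
Local Open Scope ring_scope.

(* A hypergraph on vertex set 'I_n is given by its edge set E : {set {set 'I_n}}.
   Vectors x in C^n are row vectors 'rV[C]_n, with entries x ord0 i. *)

Section Hyper.
Variable n : nat.
Implicit Types (E : {set {set 'I_n}}).

Definition is_uniform_hypergraph (k : nat) E : Prop :=
  (k <= n)%N /\ E != set0 /\ (forall e, e \in E -> #|e| = k).

Definition edges_at E (i : 'I_n) : {set {set 'I_n}} := [set e in E | i \in e].
Definition deg E (i : 'I_n) : nat := #|edges_at E i|.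

(* ((D - A) x^{k-1})_i = d_i x_i^{k-1} - sum_{e in E_i} prod_{j in e \ {i}} x_j *)
Definition lap_apply {C : numClosedFieldType} (k : nat) E (x : 'rV[C]_n) (i : 'I_n) : C :=
  (deg E i)%:R * x ord0 i ^+ k.-1
  - \sum_(e in edges_at E i) \prod_(j in e :\ i) x ord0 j.

Definition lap_eigvec {C : numClosedFieldType} (k : nat) E (lambda : C) (x : 'rV[C]_n) : Prop :=
  x != 0 /\ forall i, lap_apply k E x i = lambda * x ord0 i ^+ k.-1.

Definition lap_H_eigvec {C : numClosedFieldType} (k : nat) E (lambda : C) (x : 'rV[C]_n) : Prop :=
  lap_eigvec k E lambda x /\ forall i, x ord0 i \is Num.real.

Definition canonical {C : numClosedFieldType} (x : 'rV[C]_n) : Prop :=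
  (forall i, `|x ord0 i| <= 1) /\ exists i, `|x ord0 i| = 1.

Definition supp {C : numClosedFieldType} (x : 'rV[C]_n) : {set 'I_n} :=
  [set i | x ord0 i != 0].

Definition minimal0 {C : numClosedFieldType} (k : nat) E (x : 'rV[C]_n) : Prop :=
  lap_eigvec k E 0 x /\
  forall y : 'rV[C]_n, lap_eigvec k E 0 y -> ~ (supp y \proper supp x).

Definition minimal_canonical_H0 {C : numClosedFieldType} (k : nat) E (x : 'rV[C]_n) : Prop :=
  lap_H_eigvec k E 0 x /\ canonical x /\ minimal0 k E x.

Definition adj E : rel 'I_n := fun i j => [exists e in E, (i \in e) && (j \in e)].

Definition components E : {set {set 'I_n}} :=
  [set [set j | connect (adj E) i j] | i : 'I_n].

Definition num_components E : nat := #|components E|.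

Definition num_singletons E : nat := #|[set i : 'I_n | deg E i == 0%N]|.

Definition even_bip_partitions E (Cc : {set 'I_n}) : {set {set {set 'I_n}}} :=
  [set P : {set {set 'I_n}} | [exists S : {set 'I_n}, exists T : {set 'I_n},
     [&& P == [set S; T], S != set0, T != set0, [disjoint S & T], S :|: T == Cc
       & [forall e in E, (e \subset Cc) ==> ~~ odd #|e :&: S|]]]].

Definition even_bip_contrib E (Cc : {set 'I_n}) : nat :=
  if #|Cc| == 1%N then 1%N else #|even_bip_partitions E Cc|.

Definition num_even_bip_components E : nat :=
  (\sum_(Cc in components E) even_bip_contrib E Cc)%N.

End Hyper.

From HB Require Import structures.
From mathcomp Require Import all_boot all_order all_algebra.
From mathcomp Require Import zify.
Import Order.TTheory GRing.Theory Num.Theory.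
Set Implicit Arguments. Unset Strict Implicit. Unset Printing Implicit Defensive.
Local Open Scope ring_scope.

(* Call a pair (P, N) of disjoint vertex sets an even signing if P :|: N is a
   connected component and every edge inside it meets N in an even number of
   vertices, and let signvec P N be the vector equal to 1 on P, -1 on N and 0
   elsewhere.  The proof shows:
   - (maximum modulus) if (D - A) y^(k-1) = 0, the modulus |y_i| is constant
     along edges wherever it is maximal, hence on the whole component of a
     maximising vertex; so the support of a nonzero 0-eigenvector contains a
     component, and a minimal one is supported on exactly one component;
   - a +-1 vector on a component is a 0-eigenvector iff the component's edges
     meet its (-1)-part evenly, as ((D - A) x^(k-1))_j = x_j * sum_(e ∋ j)
     (1 - (-1)^|e ∩ N|) for k even;
   hence the minimal canonical H-eigenvectors are exactly the vectors signvec P N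
   of even signings.  Choosing the representative of {x, -x} whose positive part
   contains the least vertex of the component, each component C contributes its
   trivial signing (C, ∅) plus one signing per even-bipartite partition of C,
   which gives the count of the theorem.

   Everything holds for even k >= 2; the theorem
   itself assumes k >= 4. *)

Section Components.
Variables (n : nat) (E : {set {set 'I_n}}).

Definition compo (c : 'I_n) : {set 'I_n} := [set j | connect (adj E) c j].

Lemma adj_sym : symmetric (adj E).
Proof.
by move=> i j; apply/existsP/existsP => -[e /and3P [he hi hj]]; exists e;
  rewrite he hi hj.
Qed.

Lemma compo_refl c : c \in compo c.
Proof. by rewrite inE connect0. Qed.

Lemma compo_eq c j : j \in compo c -> compo j = compo c.
Proof.
rewrite inE => hcj; apply/setP => m.
by rewrite !inE (same_connect (sym_connect_sym adj_sym) hcj).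
Qed.

Lemma edge_sub_compo c j e : j \in compo c -> e \in E -> j \in e -> e \subset compo c.
Proof.
rewrite inE => hcj he hje; apply/subsetP => m hm; rewrite inE.
by apply: connect_trans hcj (connect1 _); apply/existsP; exists e; rewrite he hje hm.
Qed.

Lemma compo_in_components c : compo c \in components E.
Proof. by apply/imsetP; exists c. Qed.

Lemma componentsP Cc : Cc \in components E -> exists c, Cc = compo c.
Proof. by case/imsetP => c _ ->; exists c. Qed.

Lemma isolated_compo i : deg E i = 0%N -> compo i = [set i].
Proof.
move=> hdeg; apply/setP => j; rewrite !inE; apply/idP/eqP => [|->]; last exact: connect0.
case/connectP => [[|a p]] //= /andP [/existsP [e /andP [he /andP [hie _]]] _] _.
suff : (0 < deg E i)%N by rewrite hdeg.
by rewrite card_gt0; apply/set0Pn; exists e; rewrite inE he hie.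
Qed.

End Components.

Section Uniform.
Variables (n k : nat) (E : {set {set 'I_n}}).
Hypothesis hk2 : (2 <= k)%N.
Hypothesis hEk : forall e, e \in E -> #|e| = k.

Lemma card_edge_del i e : e \in E -> i \in e -> #|e :\ i| = k.-1.
Proof. by move=> he hie; rewrite -(hEk he) [in RHS](cardsD1 i e) hie. Qed.

Lemma edge_other i e : e \in E -> i \in e -> exists m, m \in e :\ i.
Proof.
move=> he hie; apply/set0Pn; rewrite -card_gt0 (card_edge_del he hie).
by case: k hk2 => [|[|k']].
Qed.

Lemma singleton_compo_isolated i : #|compo E i| == 1%N -> deg E i = 0%N.
Proof.
case/cards1P => x hx; apply/eqP; apply: contraT; rewrite -lt0n card_gt0.
case/set0Pn => e; rewrite inE => /andP [he hie].
have [m] := edge_other he hie; rewrite !inE => /andP [hmi hme].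
have hm := subsetP (edge_sub_compo (compo_refl E i) he hie) m hme.
move: hm (compo_refl E i); rewrite hx => /set1P hmx /set1P hix.
by rewrite hmx -hix eqxx in hmi.
Qed.

Lemma num_singletonsE :
  num_singletons E = #|[set Cc in components E | #|Cc| == 1%N]|.
Proof.
have -> : [set Cc in components E | #|Cc| == 1%N] =
          [set [set i] | i in [set i | deg E i == 0%N]].
  apply/setP => Cc; rewrite inE; apply/andP/imsetP => [[/componentsP [c ->] h1]|].
    have hdeg := singleton_compo_isolated h1.
    by exists c; rewrite ?inE ?hdeg // isolated_compo.
  move=> [i]; rewrite inE => /eqP hdeg ->.
  by rewrite -(isolated_compo hdeg) compo_in_components isolated_compo // cards1.
by rewrite card_in_imset //; move=> i j _ _; apply: set1_inj.
Qed.

End Uniform.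

Section Signings.
Variables (n k : nat) (E : {set {set 'I_n}}).
Hypothesis hkeven : ~~ odd k.
Hypothesis hk2 : (2 <= k)%N.
Hypothesis hEk : forall e, e \in E -> #|e| = k.
Implicit Types (p q : {set 'I_n} * {set 'I_n}).

(* p = (P, N) prescribes the +1 part P and the -1 part N of a vector supported
   on a component; it is even when every edge of the component meets N evenly. *)
Definition even_signing p : bool :=
  [&& [disjoint p.1 & p.2], (p.1 :|: p.2) \in components E &
      [forall e in E, (e \subset p.1 :|: p.2) ==> ~~ odd #|e :&: p.2|]].

Lemma even_signing_disjoint p : even_signing p -> [disjoint p.1 & p.2].
Proof. by case/and3P. Qed.

Lemma signing_compl (P N : {set 'I_n}) : [disjoint P & N] -> N = (P :|: N) :\: P.
Proof.
move=> hd; apply/setP => m; rewrite !inE.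
by case: (boolP (m \in P)) => [hmP|_]; rewrite ?(disjointFr hd hmP) ?orbT.
Qed.

(* Since edges have even size k, exchanging the two parts preserves evenness. *)
Lemma even_signing_swap p : even_signing p -> even_signing (p.2, p.1).
Proof.
case/and3P => hd hc /forall_inP hev.
apply/and3P; split => /=; [by rewrite disjoint_sym | by rewrite setUC |].
apply/forall_inP => e he; apply/implyP; rewrite setUC => hsub.
have hN := implyP (hev e he) hsub.
have hD : e :\: p.2 = e :&: p.1.
  apply/setP => m; rewrite !inE; case: (boolP (m \in e)) => hm; rewrite ?andbF //=.
  case/setUP: (subsetP hsub m hm) => hmp; last by rewrite hmp (disjointFl hd hmp).
  by rewrite hmp (disjointFr hd hmp).
have := cardsID p.2 e; rewrite hD (hEk he) => hk.
by move: hkeven; rewrite -hk oddD (negbTE hN).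
Qed.

(* The representative of {(P, N), (N, P)}: P holds the least vertex. *)
Definition normal_signing p : bool :=
  even_signing p && [exists i in p.1, [forall j in p.2, (i < j)%N]].

Lemma normal_signing_swap p : normal_signing p -> ~~ normal_signing (p.2, p.1).
Proof.
case/andP => _ /exists_inP [i hi /forall_inP hiN]; apply/negP.
case/andP => _ /exists_inP [j hj /forall_inP hjP].
by have := ltn_trans (hiN j hj) (hjP i hi); rewrite ltnn.
Qed.

Lemma even_signing_normal p :
  even_signing p -> normal_signing p \/ normal_signing (p.2, p.1).
Proof.
move=> hp; have hp' := even_signing_swap hp.
case/and3P: (hp) => hd /componentsP [c hU] _.
have hc : c \in p.1 :|: p.2 by rewrite hU compo_refl.
case: (arg_minnP (fun i : 'I_n => val i) hc) => m hm hmin.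
have hnormal q : even_signing q -> m \in q.1 ->
    (forall j, j \in q.1 :|: q.2 -> (m <= j)%N) -> normal_signing q.
  move=> hq hmq hqmin; rewrite /normal_signing hq; apply/exists_inP; exists m => //.
  apply/forall_inP => j hj; rewrite ltn_neqAle hqmin ?inE ?hj ?orbT // andbT.
  by apply: contraTneq hj => /val_inj <-; rewrite (disjointFr (even_signing_disjoint hq)).
case/setUP: (hm) => hmp; [left | right].
  exact: hnormal hp hmp hmin.
by apply: hnormal hp' hmp _ => j; rewrite /= setUC; apply: hmin.
Qed.

Lemma partition_of_signing p : normal_signing p -> p.2 != set0 ->
  [set p.2; p.1] \in even_bip_partitions E (p.1 :|: p.2).
Proof.
case/andP => /and3P [hd _ /forall_inP hev] /exists_inP [i hi _] hN.
rewrite inE; apply/existsP; exists p.2; apply/existsP; exists p.1.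
apply/andP; split => //; apply/and5P; split => //.
- by apply/set0Pn; exists i.
- by rewrite disjoint_sym.
- by rewrite setUC.
- by apply/forall_inP.
Qed.

Lemma signing_of_partition (Cc : {set 'I_n}) Q : Cc \in components E ->
  Q \in even_bip_partitions E Cc ->
  exists2 p, [&& normal_signing p, p.1 :|: p.2 == Cc & p.2 != set0] &
             Q = [set p.2; p.1].
Proof.
move=> hCc; rewrite inE => /existsP [S /existsP [T]].
case/andP => /eqP -> /and5P [hS hT hd /eqP hU /forall_inP hev].
have hTS : even_signing (T, S).
  apply/and3P; split => /=; first by rewrite disjoint_sym.
    by rewrite setUC hU.
  by rewrite setUC hU; apply/forall_inP.
case: (even_signing_normal hTS) => /= hn.
  by exists (T, S) => //=; rewrite hn setUC hU eqxx.
by exists (S, T) => //=; rewrite ?hn ?hU ?eqxx // setUC.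
Qed.

(* Distinct normal signings of a component give distinct partitions, since
   (P, N) and (N, P) are not both normal. *)
Lemma partition_of_signing_inj p q : normal_signing p -> normal_signing q ->
  p.1 :|: p.2 = q.1 :|: q.2 -> [set p.2; p.1] = [set q.2; q.1] -> p = q.
Proof.
move=> hp hq hU hPQ.
have hdp := even_signing_disjoint (andP hp).1.
have hdq := even_signing_disjoint (andP hq).1.
have : p.1 \in [set q.2; q.1] by rewrite -hPQ !inE eqxx orbT.
have hdq' : [disjoint q.2 & q.1] by rewrite disjoint_sym.
case/set2P => h1.
  have hp2 : p.2 = q.1.
    by rewrite (signing_compl hdp) hU h1 setUC -(signing_compl hdq').
  have hqp : q = (p.2, p.1) by rewrite hp2 h1 -surjective_pairing.
  by move: (normal_signing_swap hp); rewrite -hqp hq.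
apply: injective_projections => //.
by rewrite (signing_compl hdp) (signing_compl hdq) hU h1.
Qed.

(* The normal signings supported on a component Cc are its trivial signing
   (Cc, set0) and one signing for each even-bipartite partition of Cc. *)
Lemma card_signings_compo (Cc : {set 'I_n}) : Cc \in components E ->
  #|[set p | normal_signing p & p.1 :|: p.2 == Cc]| =
  (#|even_bip_partitions E Cc|).+1.
Proof.
move=> hCc; set T := [set p | [&& normal_signing p, p.1 :|: p.2 == Cc & p.2 != set0]].
have htriv : normal_signing (Cc, set0).
  have [c hc] := componentsP hCc.
  apply/andP; split.
    apply/and3P; split=> /=; [by rewrite -setI_eq0 setI0 | by rewrite setU0 |].
    by apply/forall_inP => e _; rewrite setI0 cards0 implybT.
  apply/exists_inP; exists c; first by rewrite hc compo_refl.
  by apply/forall_inP => j; rewrite inE.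
have -> : [set p | normal_signing p & p.1 :|: p.2 == Cc] = (Cc, set0) |: T.
  apply/setP => -[P N]; rewrite !inE /= xpair_eqE.
  case: (eqVneq N set0) => [->|hN]; rewrite ?setU0 ?andbT ?andbF ?orbF //=.
  by case: (eqVneq P Cc) => [->|]; rewrite ?htriv ?andbF.
rewrite cardsU1 inE eqxx !andbF add1n; congr _.+1.
have hinj : {in T &, injective (fun p => [set p.2; p.1])}.
  move=> p q; rewrite !inE => /and3P [hp /eqP hpU _] /and3P [hq /eqP hqU _].
  by apply: partition_of_signing_inj; rewrite ?hpU ?hqU.
rewrite -(card_in_imset hinj); congr #|pred_of_set _|; apply/setP => Q.
apply/imsetP/idP => [[p]|].
  by rewrite inE => /and3P [hp /eqP <- hN] ->; apply: partition_of_signing.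
by case/(signing_of_partition hCc) => p hp ->; exists p; rewrite ?inE.
Qed.

Lemma even_bip_partitions_single (Cc : {set 'I_n}) :
  #|Cc| == 1%N -> even_bip_partitions E Cc = set0.
Proof.
move=> /eqP h1; apply/setP => Q; rewrite !inE; apply/negbTE/existsP => -[S /existsP [T]].
case/andP => _ /and5P [hS hT hd /eqP hU _].
have := cardsUI S T; rewrite hU h1; move: hd; rewrite -setI_eq0 => /eqP ->.
by move: hS hT; rewrite -!card_gt0 cards0; lia.
Qed.

(* Summing over components: a one-vertex component contributes 1, any other
   component C contributes even_bip_contrib C + 1. *)
Lemma card_normal_signings : #|[set p | normal_signing p]| =
  (num_even_bip_components E + num_components E - num_singletons E)%N.
Proof.
have hsplit : #|[set p | normal_signing p]| =
    (\sum_(Cc in components E) #|[set p | normal_signing p & p.1 :|: p.2 == Cc]|)%N.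
  rewrite [LHS]cardE -sum1_size big_enum /=.
  rewrite (partition_big (fun p => p.1 :|: p.2) (fun Cc => Cc \in components E)).
    by apply: eq_bigr => Cc _; rewrite -sum1_card; apply: eq_bigl => p; rewrite !inE.
  by move=> p; rewrite inE => /andP [/and3P []].
have hcontrib Cc : Cc \in components E ->
    #|[set p | normal_signing p & p.1 :|: p.2 == Cc]| =
    (even_bip_contrib E Cc + (#|Cc| != 1%N))%N.
  move=> hCc; rewrite card_signings_compo // /even_bip_contrib.
  by case: ifP => [/even_bip_partitions_single -> |]; rewrite ?cards0 //= addn1.
have hcomp : num_components E = (\sum_(Cc in components E) (#|Cc| == 1%N) +
    \sum_(Cc in components E) (#|Cc| != 1%N))%N.
  by rewrite -big_split /num_components -sum1_card; apply: eq_bigr => Cc _; case: eqP.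
have hsing : num_singletons E = (\sum_(Cc in components E) (#|Cc| == 1%N))%N.
  rewrite (num_singletonsE hk2 hEk) -sum1_card big_mkcond [RHS]big_mkcond /=.
  by apply: eq_bigr => Cc _; rewrite inE; case: (Cc \in components E); case: eqP.
rewrite hsplit (eq_bigr _ hcontrib) big_split /= hcomp hsing.
by rewrite addnCA addKn.
Qed.

End Signings.

Section NumFacts.
Variable R : numDomainType.

Lemma prod_lt_pow (I : finType) (A : {set I}) (f : I -> R) r l :
  (forall m, m \in A -> 0 <= f m <= r) -> l \in A -> f l < r ->
  \prod_(m in A) f m < r ^+ #|A|.
Proof.
move=> hf lA hl; have [fl0 _] := andP (hf l lA).
have r0 : 0 < r by apply: le_lt_trans hl.
rewrite (bigD1 l) //= (cardsD1 l A) lA add1n exprS.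
rewrite (eq_bigl (fun m => m \in A :\ l)); last by move=> m; rewrite !inE andbC.
have hrest : \prod_(m in A :\ l) f m <= r ^+ #|A :\ l|.
  by rewrite -prodr_const; apply: ler_prod => m; rewrite inE => /andP [_ /hf].
apply: le_lt_trans (ler_wpM2l fl0 hrest) _.
by rewrite ltr_pM2r // exprn_gt0.
Qed.

Lemma exists_argmax_real (I : finType) (f : I -> R) (i0 : I) :
  (forall i, f i \is Num.real) -> exists i, forall j, f j <= f i.
Proof.
move=> hreal; suff [i hi] : exists i, forall j, j \in enum I -> f j <= f i.
  by exists i => j; apply: hi; rewrite mem_enum.
elim: (enum I) => [|a s [i hi]]; first by exists i0.
case/orP: (real_leVge (hreal a) (hreal i)) => h.
  by exists i => j; rewrite inE => /orP [/eqP -> //|]; apply: hi.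
by exists a => j; rewrite inE => /orP [/eqP -> //|/hi hj]; apply: le_trans hj h.
Qed.

Lemma one_neq_opp1 : (1 : R) != -1.
Proof. by rewrite -subr_eq0 opprK -mulr2n pnatr_eq0. Qed.

Lemma real_norm1 (x : R) : x \is Num.real -> `|x| = 1 -> x = 1 \/ x = -1.
Proof.
move=> hx hn; rewrite (realEsign hx) hn mulr1.
by case: (x < 0); [right; rewrite expr1 | left; rewrite expr0].
Qed.

Lemma sign_pow_pred (k : nat) (x : R) : ~~ odd k -> (0 < k)%N -> x * x = 1 ->
  x ^+ k.-1 = x.
Proof.
move=> hk k0 hx; have hxk : x ^+ k = 1.
  rewrite -(odd_double_half k) (negbTE hk) add0n -muln2 mulnC exprM expr2 hx.
  exact: expr1n.
by rewrite -[LHS]mulr1 -hx mulrA -exprSr prednK // hxk mul1r.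
Qed.

End NumFacts.

Section Laplacian.
Variables (C : numClosedFieldType) (n k : nat) (E : {set {set 'I_n}}).
Hypothesis hk2 : (2 <= k)%N.
Hypothesis hEk : forall e, e \in E -> #|e| = k.
Implicit Types (x y : 'rV[C]_n).

Definition lap_null y : Prop := forall i, lap_apply k E y i = 0.

Lemma eigvec0_null y : lap_eigvec k E 0 y -> lap_null y.
Proof. by case=> _ hy i; rewrite hy mul0r. Qed.

(* Triangle inequality applied to the equation at vertex j. *)
Lemma lap_null_norm y j : lap_apply k E y j = 0 ->
  (deg E j)%:R * `|y ord0 j| ^+ k.-1 <=
  \sum_(e in edges_at E j) \prod_(m in e :\ j) `|y ord0 m|.
Proof.
move/eqP; rewrite subr_eq0 => /eqP /(congr1 Num.norm); rewrite normrM normr_nat normrX => ->.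
apply: le_trans (ler_norm_sum _ _ _) _.
by apply: ler_sum => e _; rewrite normr_prod.
Qed.

Lemma max_modulus_adj y r : lap_null y -> (forall i, `|y ord0 i| <= r) ->
  forall j l, `|y ord0 j| = r -> adj E j l -> `|y ord0 l| = r.
Proof.
move=> hy hr j l hj /existsP [e /and3P [he hje hle]].
have [|hlt] := eqVneq `|y ord0 l| r => //; have {}hlt : `|y ord0 l| < r.
  by rewrite lt_neqAle hlt hr.
have hlj : l != j by apply: contraTneq hlt => ->; rewrite hj ltxx.
have hfac m : 0 <= `|y ord0 m| <= r by rewrite normr_ge0 hr.
have hbound e' : e' \in edges_at E j -> \prod_(m in e' :\ j) `|y ord0 m| <= r ^+ k.-1.
  rewrite inE => /andP [he' hje']; rewrite -(card_edge_del hEk he' hje') -prodr_const.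
  by apply: ler_prod => m _; apply: hfac.
have hstrict : \prod_(m in e :\ j) `|y ord0 m| < r ^+ k.-1.
  rewrite -(card_edge_del hEk he hje); apply: prod_lt_pow hlt => [m _|]; first exact: hfac.
  by rewrite !inE hlj hle.
have hej : e \in edges_at E j by rewrite inE he hje.
have hdeg : (deg E j)%:R * r ^+ k.-1 = \sum_(e' in edges_at E j) r ^+ k.-1.
  by rewrite sumr_const mulr_natl.
have := lap_null_norm (hy j); rewrite hj hdeg (bigD1 e) //= [X in _ <= X](bigD1 e) //=.
have hrest : \sum_(e' in edges_at E j | e' != e) \prod_(m in e' :\ j) `|y ord0 m| <=
             \sum_(e' in edges_at E j | e' != e) r ^+ k.-1.
  by apply: ler_sum => e' /andP [he' _]; apply: hbound.
by move=> /(lt_le_trans (ltr_leD hstrict hrest)); rewrite ltxx.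
Qed.

Lemma max_modulus_connect y r : lap_null y -> (forall i, `|y ord0 i| <= r) ->
  forall i j, `|y ord0 i| = r -> connect (adj E) i j -> `|y ord0 j| = r.
Proof.
move=> hy hr i j hi /connectP [p hp ->] {j}.
elim: p i hi hp => [|a p IH] i hi //= /andP [hia hp].
exact: IH (max_modulus_adj hy hr hi hia) hp.
Qed.

(* The support of a nonzero null vector contains a whole component: that of a
   vertex of maximal modulus. *)
Lemma null_supp_compo y : y != 0 -> lap_null y -> exists c, compo E c \subset supp y.
Proof.
move=> hy0 hy; have [j hj] : exists j, y ord0 j != 0.
  apply/existsP; apply: contraR hy0 => /existsPn hz.
  by apply/eqP/rowP => j; rewrite !mxE; apply/eqP; rewrite -[_ == _]negbK hz.
have [i hi] := exists_argmax_real j (fun m => normr_real (y ord0 m)).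
exists i; apply/subsetP => m; rewrite !inE => him.
rewrite -normr_gt0 (max_modulus_connect hy hi (erefl _) him).
by apply: lt_le_trans (hi j); rewrite normr_gt0.
Qed.

Definition restr (A : {set 'I_n}) y : 'rV[C]_n :=
  \row_j (if j \in A then y ord0 j else 0).

(* D - A acts componentwise: a vector vanishing on a component is killed there. *)
Lemma lap_vanish_off_compo y c : (forall j, j \notin compo E c -> y ord0 j = 0) ->
  forall i, i \notin compo E c -> lap_apply k E y i = 0.
Proof.
move=> hy0 i hi; have k1 : k.-1 = k.-2.+1 by case: k hk2 => [|[|k']].
rewrite /lap_apply hy0 // k1 exprS mul0r mulr0 sub0r big1 ?oppr0 //.
move=> e; rewrite inE => /andP [he hie]; have [m hm] := edge_other hk2 hEk he hie.
rewrite (bigD1 m) //= hy0 ?mul0r //; apply: contra hi => hmc.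
by apply: (subsetP (edge_sub_compo hmc he _)); move: hm; rewrite !inE => /andP [].
Qed.

Lemma lap_null_restr y c : lap_null y -> lap_null (restr (compo E c) y).
Proof.
move=> hy i; have [hi|hi] := boolP (i \in compo E c); last first.
  by apply: lap_vanish_off_compo hi => j hj; rewrite mxE (negbTE hj).
rewrite -(hy i) /lap_apply mxE hi; congr (_ - _).
apply: eq_bigr => e; rewrite inE => /andP [he hie].
apply: eq_bigr => m; rewrite !inE => /andP [_ hm].
by rewrite mxE (subsetP (edge_sub_compo hi he hie) m hm).
Qed.

Lemma minimal0_vanish_off_compo x c : minimal0 k E x -> x ord0 c != 0 ->
  forall j, j \notin compo E c -> x ord0 j = 0.
Proof.
move=> [hx hmin] hc; set z := restr (compo E c) x.
have hzc : z ord0 c = x ord0 c by rewrite mxE compo_refl.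
have hz : lap_eigvec k E 0 z.
  split; first by apply: contraNneq hc => hz0; rewrite -hzc hz0 mxE.
  by move=> i; rewrite (lap_null_restr c (eigvec0_null hx)) mul0r.
have hsub : supp z \subset supp x.
  by apply/subsetP => m; rewrite !inE mxE; case: ifP => // _; rewrite eqxx.
have hsup : supp x \subset supp z.
  by apply: contraT => hns; case: (hmin z hz); rewrite properE hsub.
move=> j; rewrite inE => hj; have := subsetP hsup j.
by rewrite !inE mxE inE (negbTE hj) eqxx; case: eqP => // _ /(_ isT).
Qed.

Lemma minimal0_of_supp_compo x c : lap_eigvec k E 0 x -> supp x = compo E c ->
  minimal0 k E x.
Proof.
move=> hx hsx; split => // y [hy0 hy] /properP [hyx [m hmx /negP]]; apply.
have [c' hc'] := null_supp_compo hy0 (eigvec0_null (conj hy0 hy)).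
have hc'c : c' \in compo E c by rewrite -hsx (subsetP hyx) // (subsetP hc') ?compo_refl.
by apply: (subsetP hc'); rewrite (compo_eq hc'c) -hsx.
Qed.

End Laplacian.

Section SignVectors.
Variables (C : numClosedFieldType) (n k : nat) (E : {set {set 'I_n}}).
Hypothesis hkeven : ~~ odd k.
Hypothesis hk2 : (2 <= k)%N.
Hypothesis hEk : forall e, e \in E -> #|e| = k.
Implicit Types (P N : {set 'I_n}) (x : 'rV[C]_n).

Definition signvec P N : 'rV[C]_n :=
  \row_j (if j \in P then 1 else if j \in N then -1 else 0).

Lemma signvec_real P N m : signvec P N ord0 m \is Num.real.
Proof. by rewrite mxE; case: ifP => _; rewrite ?real1 //; case: ifP; rewrite ?realN ?real1. Qed.

Lemma signvec_norm P N m : `|signvec P N ord0 m| = (m \in P :|: N)%:R.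
Proof.
rewrite mxE inE; case: ifP => _; first by rewrite normr1.
by case: ifP => _; rewrite ?normrN ?normr1 ?normr0.
Qed.

Lemma signvec_sq P N m : m \in P :|: N ->
  signvec P N ord0 m * signvec P N ord0 m = 1.
Proof.
rewrite mxE inE; case: ifP => [_ _|_ /= hN]; first by rewrite mulr1.
by rewrite hN mulrNN mulr1.
Qed.

Lemma signvec_neq0 P N m : m \in P :|: N -> signvec P N ord0 m != 0.
Proof. by rewrite -normr_eq0 signvec_norm => ->; rewrite oner_eq0. Qed.

Lemma supp_signvec P N : supp (signvec P N) = P :|: N.
Proof.
apply/setP => m; rewrite inE -normr_eq0 signvec_norm.
by case: (_ \in _); rewrite ?oner_eq0 ?eqxx.
Qed.

Lemma signvec_neg P N : [disjoint P & N] -> - signvec P N = signvec N P.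
Proof.
move=> hd; apply/rowP => m; rewrite !mxE.
have [hmP|hmP] := boolP (m \in P); first by rewrite (disjointFr hd hmP).
by case: (m \in N); rewrite ?opprK ?oppr0.
Qed.

Lemma signvec_inj (p q : {set 'I_n} * {set 'I_n}) :
  [disjoint p.1 & p.2] -> [disjoint q.1 & q.2] ->
  signvec p.1 p.2 = signvec q.1 q.2 -> p = q.
Proof.
have memE (Q M : {set 'I_n}) m : [disjoint Q & M] ->
    (m \in Q) = (signvec Q M ord0 m == 1) /\ (m \in M) = (signvec Q M ord0 m == -1).
  move=> hd; rewrite mxE; have [hmQ|hmQ] := boolP (m \in Q).
    by rewrite (disjointFr hd hmQ) eqxx (negbTE (one_neq_opp1 _)).
  have [hmM|hmM] := boolP (m \in M); first by rewrite eqxx eq_sym (negbTE (one_neq_opp1 _)).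
  by rewrite eq_sym oner_eq0 eq_sym oppr_eq0 oner_eq0.
move=> hd hd' h; apply: injective_projections; apply/setP => m.
  by rewrite (memE _ _ m hd).1 (memE _ _ m hd').1 h.
by rewrite (memE _ _ m hd).2 (memE _ _ m hd').2 h.
Qed.

Lemma signvec_of_signs x (A : {set 'I_n}) :
  (forall j, j \in A -> x ord0 j = 1 \/ x ord0 j = -1) ->
  (forall j, j \notin A -> x ord0 j = 0) ->
  exists P N, [/\ [disjoint P & N], P :|: N = A & x = signvec P N].
Proof.
move=> hon hoff; exists [set j in A | x ord0 j == 1], [set j in A | x ord0 j == -1].
have h1 := negbTE (one_neq_opp1 C); split.
- rewrite -setI_eq0; apply/eqP/setP => m; rewrite !inE.
  by case: (eqVneq (x ord0 m) 1) => [->|]; rewrite ?h1 ?andbF.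
- apply/setP => m; rewrite !inE -andb_orr.
  by case: (boolP (m \in A)) => // hm; case: (hon m hm) => ->; rewrite eqxx ?orbT.
- apply/rowP => m; rewrite mxE !inE; case: (boolP (m \in A)) => /= hm; last exact: hoff.
  by case: (hon m hm) => ->; rewrite eqxx // eq_sym h1.
Qed.

Lemma prod_signvec P N (e : {set 'I_n}) : [disjoint P & N] -> e \subset P :|: N ->
  \prod_(m in e) signvec P N ord0 m = (-1) ^+ #|e :&: N|.
Proof.
move=> hd he; rewrite -prodr_const (big_setID N) /= setIC.
rewrite [X in _ * X = _]big1 ?mulr1 => [|m]; last first.
  rewrite !inE mxE => /andP [hmN hme].
  by case/setUP: (subsetP he m hme) => [-> // | hmN']; rewrite hmN' in hmN.
by apply: eq_bigr => m; rewrite inE mxE => /andP [hmN _]; rewrite (disjointFl hd hmN) hmN.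
Qed.

Lemma lap_signvec P N c j : [disjoint P & N] -> P :|: N = compo E c ->
  j \in compo E c -> lap_apply k E (signvec P N) j =
  signvec P N ord0 j * \sum_(e in edges_at E j) (1 - (-1) ^+ #|e :&: N|).
Proof.
move=> hd hU hj; have hsq : signvec P N ord0 j * signvec P N ord0 j = 1.
  by apply: signvec_sq; rewrite hU.
rewrite /lap_apply sign_pow_pred ?(leq_trans _ hk2) //.
rewrite sumrB sumr_const mulrBr mulr_sumr; congr (_ - _); first by rewrite mulrC.
apply: eq_bigr => e; rewrite inE => /andP [he hje].
have hsub : e \subset P :|: N by rewrite hU (edge_sub_compo hj he hje).
rewrite -(prod_signvec hd hsub) (bigD1 j hje) /= mulrA hsq mul1r.
by apply: eq_bigl => m; rewrite !inE andbC.
Qed.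

Lemma signvec_null_even P N c : [disjoint P & N] -> P :|: N = compo E c ->
  lap_null k E (signvec P N) <->
  (forall e, e \in E -> e \subset compo E c -> ~~ odd #|e :&: N|).
Proof.
move=> hd hU; split=> [hnull e he hsub | hev i].
  have [j hje] : exists j, j \in e.
    by apply/set0Pn; rewrite -card_gt0 (hEk he) (leq_trans _ hk2).
  have hj := subsetP hsub j hje.
  have hjU : j \in P :|: N by rewrite hU.
  move: (hnull j); rewrite (lap_signvec hd hU hj) => /eqP.
  rewrite mulf_eq0 (negbTE (signvec_neq0 hjU)) /= => /eqP hsum.
  have hterm e' : e' \in edges_at E j -> 0 <= 1 - (-1) ^+ #|e' :&: N| :> C.
    move=> _; rewrite subr_ge0 -signr_odd; case: (odd _); rewrite ?expr0 ?expr1 //.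
    exact: le_trans (lerN10 _) ler01.
  have hej : e \in edges_at E j by rewrite inE he hje.
  move/eqP: (psumr_eq0P hterm hsum hej); rewrite subr_eq0 -signr_odd.
  by case: (odd _); rewrite // expr1 (negbTE (one_neq_opp1 _)).
have [hi|hi] := boolP (i \in compo E c); last first.
  apply: (lap_vanish_off_compo hk2 hEk) hi => j hj.
  by apply/eqP; rewrite -normr_eq0 signvec_norm hU (negbTE hj).
rewrite (lap_signvec hd hU hi) big1 ?mulr0 // => e; rewrite inE => /andP [he hie].
by rewrite -signr_odd (negbTE (hev e he (edge_sub_compo hi he hie))) expr0 subrr.
Qed.

Lemma signvec_minimal_canonical p :
  even_signing E p -> minimal_canonical_H0 k E (signvec p.1 p.2).
Proof.
case: p => P N /and3P [/= hd /componentsP [c hU] /forall_inP hev].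
have hnull : lap_null k E (signvec P N).
  apply/(signvec_null_even hd hU) => e he hsub.
  by move: (hev e he); rewrite /= hU hsub.
have hc : c \in P :|: N by rewrite hU compo_refl.
have hx : lap_eigvec k E 0 (signvec P N).
  split; last by move=> i; rewrite hnull mul0r.
  by apply: contraNneq (signvec_neq0 hc) => ->; rewrite mxE.
split; [split=> // | split].
- exact: signvec_real.
- split=> [i|]; first by rewrite signvec_norm; case: (_ \in _); rewrite ?ler01.
  by exists c; rewrite signvec_norm hc.
- by apply: (minimal0_of_supp_compo (c := c) hEk hx); rewrite supp_signvec.
Qed.

(* Conversely, a minimal canonical H-eigenvector of 0 is +-1 on the component
   of a vertex of modulus 1 and vanishes elsewhere, so it comes from an even
   signing. *)
Lemma minimal_canonical_signing x : minimal_canonical_H0 k E x ->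
  exists2 p, even_signing E p & x = signvec p.1 p.2.
Proof.
case=> [[hx hreal] [[hle1 [c hc]] hmin]].
have hc0 : x ord0 c != 0 by rewrite -normr_eq0 hc oner_eq0.
have hon j : j \in compo E c -> x ord0 j = 1 \/ x ord0 j = -1.
  rewrite inE => hcj; apply: real_norm1 => //.
  exact: (max_modulus_connect hEk (eigvec0_null hx) hle1 hc hcj).
have [P [N [hd hU hxPN]]] :=
  signvec_of_signs hon (minimal0_vanish_off_compo hk2 hEk hmin hc0).
exists (P, N) => //; apply/and3P; split => //=; first by rewrite hU compo_in_components.
apply/forall_inP => e he; apply/implyP; rewrite hU; move: e he.
by apply/(signvec_null_even hd hU); rewrite -hxPN; apply: eigvec0_null.
Qed.

Lemma signvec_normal_opp p q : normal_signing E p -> normal_signing E q ->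
  - signvec p.1 p.2 <> signvec q.1 q.2.
Proof.
move=> hp hq; have hdp := even_signing_disjoint (andP hp).1.
have hdp' : [disjoint (p.2, p.1).1 & (p.2, p.1).2] by rewrite disjoint_sym.
rewrite signvec_neg // => /(signvec_inj hdp' (even_signing_disjoint (andP hq).1)) hqp.
by move: (normal_signing_swap hp); rewrite hqp hq.
Qed.

Lemma minimal_canonical_normal x : minimal_canonical_H0 k E x <->
  exists2 p, normal_signing E p & x = signvec p.1 p.2 \/ x = - signvec p.1 p.2.
Proof.
split=> [/minimal_canonical_signing [p hp ->] | [p /andP [hp _] [-> | ->]]].
- case: (even_signing_normal hkeven hEk hp) => hn; first by exists p => //; left.
  by exists (p.2, p.1) => //; right; rewrite signvec_neg // disjoint_sym
    (even_signing_disjoint hp).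
- exact: signvec_minimal_canonical.
- rewrite signvec_neg ?(even_signing_disjoint hp) //.
  exact: (signvec_minimal_canonical (p := (p.2, p.1))) (even_signing_swap hkeven hEk hp).
Qed.

End SignVectors.

Set Bullet Behavior "Strict Subproofs".

(* Representatives: the sign vectors of the normal signings. *)
Theorem proposition5p2 (C : numClosedFieldType) (n k : nat) (E : {set {set 'I_n}}) :
  ~~ odd k -> (4 <= k)%N -> is_uniform_hypergraph k E ->
  exists s : seq 'rV[C]_n,
    [/\ uniq s,
        (forall x, x \in s -> - x \notin s),
        (forall x, minimal_canonical_H0 k E x <-> (x \in s \/ - x \in s)) &
        size s = (num_even_bip_components E + num_components E - num_singletons E)%N].
Proof.
move=> hkeven hk4 [_ [_ hEk]]; have hk2 : (2 <= k)%N by apply: leq_trans hk4.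
pose reps := enum [set p | normal_signing E p].
have memR p : (p \in reps) = normal_signing E p by rewrite mem_enum inE.
exists [seq signvec C p.1 p.2 | p <- reps]; split.
- rewrite map_inj_in_uniq ?enum_uniq // => p q; rewrite !memR => hp hq.
  exact: signvec_inj (even_signing_disjoint (andP hp).1) (even_signing_disjoint (andP hq).1).
- move=> _ /mapP [p hp ->]; apply/negP => /mapP [q hq].
  by move: hp hq; rewrite !memR; apply: signvec_normal_opp.
- move=> x; rewrite (minimal_canonical_normal hkeven hk2 hEk); split.
  + by case=> p hp [->|->]; [left | right; rewrite opprK]; apply: map_f; rewrite memR.
  + case=> /mapP [p]; rewrite memR => hp hx; exists p => //; first by left.
    by right; rewrite -hx opprK.
- by rewrite size_map -cardE (card_normal_signings hkeven hk2 hEk).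
Qed.
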